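(* Given $c_0>0$ there exists $c>0$ such that for all $n\ge1$ and all integers $h$ with $0\le h\le c_0 n$, $|\mathcal A^h_n| \ge |\mathcal F^h_n| \ge c^n\, h^h\, n!$, and consequently $|\widetilde{\mathcal A}^h_n| \ge |\widetilde{\mathcal F}^h_n| \ge c^n h^h$.
   Context: All graphs are finite and simple; for a graph class $\mathcal B$ (closed under isomorphism), $\mathcal B_n$ is the set of graphs in $\mathcal B$ on vertex set $[n]$, and $\widetilde{\mathcal B}_n$ the set of unlabelled $n$-vertex graphs in $\mathcal B$. For a surface $S$, $\mathcal E^S$ is the class of graphs embeddable (not necessarily cellularly) in $S$. For an integer $h\ge0$: $\mathcal E^h$ is the class of graphs embeddable in some surface of Euler genus at most $h$; $\mathcal O\mathcal E^h$ (resp. $\mathcal N\mathcal E^h$) the same with only orientable (resp. non-orientable) surfaces, the sphere counting as both; $\mathcal A^h$ is any one of $\mathcal O\mathcal E^h,\mathcal N\mathcal E^h,\mathcal E^h,\mathcal O\mathcal E^h\cap\mathcal N\mathcal E^h$. $\mathcal F^h$ is the class of graphs $G$ every cellular embedding of which has Euler genus at most $h$; equivalently $e(G)-v(G)+\kappa(G)\le h$, $\kappa(G)$ the number of components. Convention $0^0=1$. *)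

From HB Require Import structures.
From mathcomp Require Import all_boot all_order all_algebra.
From mathcomp Require Import fingroup perm.
From mathcomp Require Import reals.
Set Implicit Arguments. Unset Strict Implicit. Unset Printing Implicit Defensive.
Import Order.TTheory GRing.Theory Num.Theory.

Definition graph (n : nat) := {set {set 'I_n}}.

Definition simpleg n (E : graph n) : bool := [forall e in E, #|e| == 2].

Definition adjg n (E : graph n) : rel 'I_n := fun x y => [set x; y] \in E.

Definition ncomp n (E : graph n) : nat :=
  #|[set [set y | connect (adjg E) x y] | x : 'I_n]|.

Definition inF (h : nat) n (E : graph n) : bool :=
  simpleg E && (#|E| + ncomp E <= h + n)%N.

(* ---------- Cellular embeddings as generalized maps (gems) -------------
   Flags of a graph H are triples (u,v,s) with uv an edge of H and s a side.
   a0 swaps the endpoint, a2 swaps the side; a gem structure is given by a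
   fixed-point-free involution a1 on flags fixing the vertex, such that the
   flags at each vertex form a single <a1,a2>-orbit.  Faces are the
   <a0,a1>-orbits; the embedding is orientable iff the flags can be
   2-coloured so that each a_i changes colour. *)
Definition flag (n : nat) := ('I_n * 'I_n * bool)%type.

Definition fvalid n (H : graph n) (x : flag n) : bool := [set x.1.1; x.1.2] \in H.

Definition a0 n (x : flag n) : flag n := (x.1.2, x.1.1, x.2).
Definition a2 n (x : flag n) : flag n := (x.1.1, x.1.2, ~~ x.2).

Definition is_gem n (H : graph n) (a1 : {ffun flag n -> flag n}) : bool :=
  [forall x, fvalid H x ==>
      [&& fvalid H (a1 x), a1 (a1 x) == x, a1 x != x & (a1 x).1.1 == x.1.1]]
  && [forall x, forall y, [&& fvalid H x, fvalid H y & x.1.1 == y.1.1] ==>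
        connect (fun p q : flag n => (q == a1 p) || (q == a2 p)) x y].

Definition nfaces n (H : graph n) (a1 : {ffun flag n -> flag n}) : nat :=
  if H == set0 then 1%N (* single vertex on the sphere: one face *)
  else #|[set [set y | connect (fun p q : flag n => (q == a0 p) || (q == a1 p)) x y]
          | x in [set x | fvalid H x]]|.

Definition egenus n (H : graph n) (a1 : {ffun flag n -> flag n}) : int :=
  (2 + #|H|)%:Z - (n + nfaces H a1)%:Z.

Definition orientable_gem n (H : graph n) (a1 : {ffun flag n -> flag n}) : bool :=
  [exists s : {ffun flag n -> bool}, [forall x, fvalid H x ==>
     [&& s (a0 x) != s x, s (a1 x) != s x & s (a2 x) != s x]]].

Inductive kind := OEk | NEk | Ek | OENEk.

Definition good_embedding (k : kind) (h : nat) (n : nat) (H : graph n)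
  (a1 : {ffun flag n -> flag n}) : bool :=
  let g := egenus H a1 in
  match k with
  | OEk => orientable_gem H a1 && (g <= h%:Z)%R
  | Ek => (g <= h%:Z)%R
  | NEk => (g <= h%:Z)%R && [|| ~~ orientable_gem H a1, (g < h%:Z)%R | g == 0%R]
  | OENEk => false
  end.

Arguments good_embedding k h {n} H a1.

(* G embeds in a surface of the relevant kind with Euler genus <= h iff G is a
   spanning subgraph of a connected simple graph H on the same vertex set
   having a cellular embedding of the relevant kind. *)
Definition inA1 (k : kind) (h : nat) n (E : graph n) : bool :=
  simpleg E &&
  [exists H : graph n, [&& simpleg H, E \subset H, (ncomp H <= 1)%N &
     [exists a1 : {ffun flag n -> flag n}, is_gem H a1 && good_embedding k h H a1]]].

Definition inA (k : kind) (h : nat) n (E : graph n) : bool :=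
  match k with
  | OENEk => inA1 OEk h E && inA1 NEk h E
  | _ => inA1 k h E
  end.

Definition lcount n (P : pred (graph n)) : nat := #|[set E : graph n | P E]|.

Definition isog n (E E' : graph n) : bool :=
  [exists s : {perm 'I_n}, E' == [set [set s x | x in e] | e : {set 'I_n} in E]].

Definition ucount n (P : pred (graph n)) : nat :=
  #|[set [set E' : graph n | P E' && isog E E'] | E in [set E : graph n | P E]]|.

From HB Require Import structures.
From mathcomp Require Import all_boot all_order all_algebra fingroup perm.
From mathcomp Require Import reals zify.
Set Implicit Arguments. Unset Strict Implicit. Unset Printing Implicit Defensive.
Import Order.TTheory GRing.Theory Num.Theory.

(* A graph G in F^h extends to a connected spanning supergraph H with
   e(H) - n + 1 <= e(G) - n + kappa(G) <= h.  The gem of a rotation system of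
   H is a cellular embedding with at least one face, so by Euler's formula its
   Euler genus is at most e(H) - n + 1 <= h; it is orientable when no edge is
   twisted, and non-orientable when a single edge of a cycle of G is twisted.
   Only the non-orientable classes with genus exactly h > 0 need the twist,
   and then e(G) + kappa(G) = n + h > n, so G is not a forest.

   For the lower bound, a spanning tree in which every vertex i > 0 picks a
   parent j with 2j <= i, together with h of the C = C(n/2, 2) pairs inside
   the upper half of the vertices, determines a graph of F^h, and distinct
   choices give distinct graphs.  There are at least n! / 2^n trees, and
   C(C, h) >= (C - h)^h / h^h >= h^h / L^h with L = O(D^2) when h <= D n
   and n is large (small n only cost a constant factor).
   Dividing by the at most n! labellings of an unlabelled graph gives the
   unlabelled bound. *)

Lemma connect_preserve (T : finType) (e : rel T) (P : T -> Prop) x y :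
  (forall a b, P a -> e a b -> P b) -> connect e x y -> P x -> P y.
Proof.
move=> eP /connectP [p pth ->]; elim: p x pth => [|z p IHp] x //=.
by move=> /andP [exz pz] Px; apply: IHp pz (eP _ _ Px exz).
Qed.

Section Components.
Variable n : nat.
Implicit Types E : graph n.

Lemma adjg_sym E : symmetric (adjg E).
Proof. by move=> x y; rewrite /adjg setUC. Qed.

Lemma connect_adjg_sym E : connect_sym (adjg E).
Proof. exact/sym_connect_sym/adjg_sym. Qed.

Lemma connect_adjgS E1 E2 x y : E1 \subset E2 ->
  connect (adjg E1) x y -> connect (adjg E2) x y.
Proof. by move=> sE12; apply: connect_sub => a b ab; apply/connect1/(subsetP sE12). Qed.

Definition comp E x := [set y | connect (adjg E) x y].

Lemma eq_compP E x y : reflect (comp E x = comp E y) (connect (adjg E) x y).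
Proof.
apply: (iffP idP) => [cxy|exy].
  by apply/setP => z; rewrite !inE (same_connect (connect_adjg_sym E) cxy).
by have := connect0 (adjg E) y; rewrite -inE -/(comp E y) -exy inE.
Qed.

Lemma ncompE E : ncomp E = #|[set comp E x | x : 'I_n]|.
Proof. by []. Qed.

Lemma ncomp_le1 E x0 : (forall x, connect (adjg E) x0 x) -> (ncomp E <= 1)%N.
Proof.
move=> cx0; rewrite ncompE -(cards1 (comp E x0)); apply: subset_leq_card.
by apply/subsetP => C /imsetP [x _ ->]; rewrite inE; apply/eqP/esym/eq_compP.
Qed.

Lemma ncomp_le_n E : (ncomp E <= n)%N.
Proof. by rewrite ncompE -[n in (_ <= n)%N]card_ord leq_imset_card. Qed.

Lemma ncomp_gt0 E : (0 < n)%N -> (0 < ncomp E)%N.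
Proof.
by move=> n0; rewrite ncompE card_gt0; apply/set0Pn; exists (comp E (Ordinal n0)); apply: imset_f.
Qed.

Lemma ncomp_merge E' E x y : E' \subset E -> [set x; y] \in E ->
  ~~ connect (adjg E') x y -> (ncomp E < ncomp E')%N.
Proof.
move=> sE xyE nc.
pose g (C : {set 'I_n}) := [set z | [exists a in C, connect (adjg E) a z]].
have gE a : g (comp E' a) = comp E a.
  apply/setP => z; rewrite !inE; apply/existsP/idP => [[b /andP [] ]|caz].
    by rewrite inE => /(connect_adjgS sE) cab; apply: connect_trans cab.
  by exists a; rewrite inE connect0.
rewrite !ncompE.
have -> : [set comp E x | x : 'I_n] = g @: [set comp E' x | x : 'I_n].
  by rewrite -imset_comp; apply: eq_imset => a /=; rewrite gE.
rewrite ltn_neqAle leq_imset_card andbT; apply/negP => /imset_injP inj.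
suff /eq_compP : comp E' x = comp E' y by rewrite (negbTE nc).
by apply: inj; rewrite ?imset_f // !gE; apply/eq_compP/connect1.
Qed.

End Components.

Section Forests.
Variable n : nat.
Implicit Types E : graph n.

Definition nonbridge E x y :=
  [&& x != y, [set x; y] \in E & connect (adjg (E :\ [set x; y])) x y].

Lemma simpleg_edgeP E e : simpleg E -> e \in E -> exists x y, x != y /\ e = [set x; y].
Proof. by move=> /forallP/(_ e) sE eE; apply/cards2P; rewrite eE in sE. Qed.

Lemma simplegS E1 E2 : E1 \subset E2 -> simpleg E2 -> simpleg E1.
Proof.
by move=> sE12 /forallP sE2; apply/forall_inP => e /(subsetP sE12) eE; apply: (implyP (sE2 e)).
Qed.

(* Induction on the edges: as every edge is a bridge, deleting one increases
   the number of components. *)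
Lemma forest_bound E : simpleg E -> (forall x y, ~~ nonbridge E x y) ->
  (#|E| + ncomp E <= n)%N.
Proof.
elim: {E}#|E| {-2}E (erefl #|E|) => [|k IHk] E cardE sE nb.
  by move: cardE => /eqP; rewrite cards_eq0 => /eqP ->; rewrite cards0 ncomp_le_n.
have [e eE] : {e | e \in E} by apply/sigW/set0Pn; rewrite -card_gt0 cardE.
have [x [y [xy exy]]] := simpleg_edgeP sE eE; subst e.
set E' := E :\ [set x; y].
have sE' : E' \subset E by apply: subsetDl.
have cardE' : #|E'| = k by move: cardE; rewrite (cardsD1 [set x; y]) eE => -[].
have nb' u v : ~~ nonbridge E' u v.
  apply: contra (nb u v) => /and3P [uv /(subsetP sE') uvE c].
  by rewrite /nonbridge uv uvE (connect_adjgS _ c) // setSD.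
have nc : ~~ connect (adjg E') x y by have := nb x y; rewrite /nonbridge xy eE.
have := IHk E' cardE' (simplegS sE' sE) nb'.
have := ncomp_merge sE' eE nc; rewrite (cardsD1 [set x; y] E) eE cardE'; lia.
Qed.

Lemma connected_extension E : (0 < n)%N -> simpleg E -> exists H : graph n,
  [/\ simpleg H, E \subset H, (ncomp H <= 1)%N & (#|H| + 1 <= #|E| + ncomp E)%N].
Proof.
move=> n0; elim: {E}(ncomp E) {-2}E (leqnn (ncomp E)) => [|k IHk] E ncE sE.
  by have := ncomp_gt0 E n0; rewrite lt0n -leqn0 ncE.
have [allc|] := boolP [forall y, connect (adjg E) (Ordinal n0) y].
  exists E; split=> //; last by rewrite leq_add2l ncomp_gt0.
  by apply: (ncomp_le1 (x0 := Ordinal n0)); apply/forallP.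
rewrite negb_forall => /existsP [y nc]; set x := Ordinal n0 in nc.
have xy : x != y by apply: contraNneq nc => ->; rewrite connect0.
have xyE : [set x; y] \notin E by apply: contra nc => xyE; apply: connect1.
set E2 := [set x; y] |: E.
have sE2 : E \subset E2 by apply: subsetUr.
have lt21 := ncomp_merge sE2 (setU11 _ _) nc.
have sgE2 : simpleg E2.
  apply/forall_inP => f; rewrite in_setU1 => /orP [/eqP ->|fE]; first by rewrite cards2 xy.
  exact: (implyP (forallP sE f)).
have [|H [sH E2H cH bH]] := IHk E2 _ sgE2; first exact: leq_trans lt21 ncE.
exists H; split => //; first exact: subset_trans E2H.
move: bH lt21; rewrite /E2 cardsU1 xyE; lia.
Qed.

End Forests.

Lemma a2K n : involutive (@a2 n).
Proof. by case=> [[u v] b]; rewrite /a2 /= negbK. Qed.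

(* The gem of a rotation system: the neighbours of u are cyclically ordered
   by [nbrs u], and an edge uv is twisted iff [w u v = w v u].  In the
   coordinate [tside x = x.2 (+) w u v] the involution a1 pairs (u, v, true)
   with (u, next v, false), so a2 * a1 walks around the rotation at u. *)
Section RotationGem.
Variables (n : nat) (H : graph n) (w : 'I_n -> 'I_n -> bool).

Definition nbrs u := enum [set v | [set u; v] \in H].
Definition tside (x : flag n) := x.2 (+) w x.1.1 x.1.2.
Definition mkflag u v t : flag n := (u, v, t (+) w u v).
Definition rotation_gem := [ffun x : flag n => if tside x
  then mkflag x.1.1 (next (nbrs x.1.1) x.1.2) false
  else mkflag x.1.1 (prev (nbrs x.1.1) x.1.2) true].

Lemma fvalidE x : fvalid H x = (x.1.2 \in nbrs x.1.1).
Proof. by rewrite /fvalid mem_enum inE. Qed.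

Lemma tside_mkflag u v t : tside (mkflag u v t) = t.
Proof. by rewrite /tside /mkflag /= addbK. Qed.

Lemma mkflag_tside x : x = mkflag x.1.1 x.1.2 (tside x).
Proof. by case: x => [[u v] b]; rewrite /mkflag /tside /= addbK. Qed.

Lemma tside_gem x : tside (rotation_gem x) = ~~ tside x.
Proof. by rewrite ffunE; case: (tside x); rewrite tside_mkflag. Qed.

Lemma tside_a2 x : tside (a2 x) = ~~ tside x.
Proof. by rewrite /tside /a2 /= addNb. Qed.

Lemma gem_vertex x : (rotation_gem x).1.1 = x.1.1.
Proof. by rewrite ffunE; case: (tside x). Qed.

Lemma gem_fvalid x : fvalid H x -> fvalid H (rotation_gem x).
Proof. by rewrite !fvalidE ffunE; case: (tside x) => /=; rewrite ?mem_next ?mem_prev. Qed.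

Lemma rotation_gemK : involutive rotation_gem.
Proof.
move=> x; rewrite [in RHS](mkflag_tside x) [rotation_gem x]ffunE.
case: (tside x); rewrite ffunE tside_mkflag /=.
  by rewrite prev_next ?enum_uniq.
by rewrite next_prev ?enum_uniq.
Qed.

Lemma gem_neq x : rotation_gem x != x.
Proof. by apply/eqP => gx; have := tside_gem x; rewrite gx; case: (tside x). Qed.

Let R12 (p q : flag n) := (q == rotation_gem p) || (q == a2 p).

Lemma connect_side x t :
  connect R12 x (mkflag x.1.1 x.1.2 t) /\ connect R12 (mkflag x.1.1 x.1.2 t) x.
Proof.
have [<-|tN] := eqVneq (tside x) t; first by rewrite -mkflag_tside connect0.
have a2x : a2 x = mkflag x.1.1 x.1.2 t.
  by rewrite (mkflag_tside (a2 x)) tside_a2 /=; case: (tside x) t tN => -[].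
by split; apply/connect1/orP; right; rewrite -a2x ?a2K eqxx.
Qed.

Lemma connect_next u v : connect R12 (mkflag u v true) (mkflag u (next (nbrs u) v) true).
Proof.
apply: (@connect_trans _ _ (mkflag u (next (nbrs u) v) false)).
  by apply: connect1; apply/orP; left; rewrite ffunE tside_mkflag.
by apply: connect1; apply/orP; right.
Qed.

Lemma connect_at_vertex x y :
  fvalid H x -> fvalid H y -> x.1.1 = y.1.1 -> connect R12 x y.
Proof.
rewrite !fvalidE => vx vy exy.
apply: connect_trans (connect_side x true).1 _.
apply: connect_trans _ (connect_side y true).2; rewrite -exy in vy *.
have := fconnect_cycle (cycle_next (enum_uniq _)) vx y.1.2.
rewrite vy => /(connect_preserve (P := fun v => connect R12 _ (mkflag x.1.1 v true))).
apply=> [a b cxa /eqP <-|]; last exact: connect0.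
exact: connect_trans cxa (connect_next _ _).
Qed.

Lemma rotation_gem_is_gem : is_gem H rotation_gem.
Proof.
apply/andP; split.
  apply/forall_inP => x vx.
  by rewrite gem_fvalid // rotation_gemK eqxx gem_neq gem_vertex eqxx.
apply/forallP => x; apply/forallP => y; apply/implyP => /and3P [vx vy /eqP exy].
exact: connect_at_vertex.
Qed.

End RotationGem.

Section Twists.
Variables (n : nat) (H : graph n).
Hypothesis sH : simpleg H.

Lemma nfaces_gt0 a1 : (0 < nfaces H a1)%N.
Proof.
rewrite /nfaces; case: ifP => // /set0Pn [e eH].
have [x [y [_ exy]]] := simpleg_edgeP sH eH; rewrite exy in eH.
rewrite card_gt0; apply/set0Pn.
by exists [set z | connect (fun p q : flag n => (q == a0 p) || (q == a1 p)) (x, y, false) z];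
  apply: imset_f; rewrite inE /fvalid.
Qed.

Lemma egenus_le a1 : (egenus H a1 <= (#|H| + 1)%:Z - n%:Z)%R.
Proof. by have := nfaces_gt0 a1; rewrite /egenus; lia. Qed.

Lemma fvalid_neq x : fvalid H x -> x.1.1 != x.1.2.
Proof.
rewrite /fvalid => vx; apply/eqP => exy.
by have /forall_inP/(_ _ vx) := sH; rewrite exy setUid cards1.
Qed.

(* Edges in T are twisted: their two ends see the same side coordinate. *)
Definition twist (T : {set {set 'I_n}}) (u v : 'I_n) :=
  (u < v)%N && ([set u; v] \notin T).

Lemma tside_a0 T x : fvalid H x ->
  tside (twist T) (a0 x) = tside (twist T) x (+) ([set x.1.1; x.1.2] \notin T).
Proof.
case: x => [[u v] b] /fvalid_neq /= uv; rewrite /tside /twist /= setUC.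
move: uv; rewrite -val_eqE /=.
by case: ltngtP => //= _ _; case: b; case: ([set u; v] \in T).
Qed.

Lemma orientable_untwisted : orientable_gem H (rotation_gem H (twist set0)).
Proof.
apply/existsP; exists [ffun x => tside (twist set0) x]; apply/forall_inP => x vx.
have sE y : [ffun x => tside (twist set0) x] y = tside (twist set0) y by rewrite ffunE.
rewrite !sE tside_gem tside_a2 tside_a0 // in_set0 addbT.
by case: (tside _ x).
Qed.

(* The colour [s x (+) tside x] of an orienting 2-colouring is invariant under
   a1, a2 and along untwisted edges; a cycle through a single twisted edge
   would change it. *)
Lemma nonorientable_twisted p q : nonbridge H p q ->
  ~~ orientable_gem H (rotation_gem H (twist [set [set p; q]])).
Proof.
move=> /and3P [pq pqH cpq]; apply/existsP => -[s /forall_inP sP].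
set w := twist [set [set p; q]]; set a1 := rotation_gem H w.
pose c x := s x (+) tside w x.
have flip (b b' : bool) : b != b' -> b = ~~ b' by case: b; case: b'.
have c_a1 x : fvalid H x -> c (a1 x) = c x.
  by move=> /sP /and3P [_ /flip s1 _]; rewrite /c s1 tside_gem addbN addNb negbK.
have c_a2 x : fvalid H x -> c (a2 x) = c x.
  by move=> /sP /and3P [_ _ /flip s2]; rewrite /c s2 tside_a2 addbN addNb negbK.
have c_a0 x : fvalid H x -> c (a0 x) = c x (+) ([set x.1.1; x.1.2] == [set p; q]).
  move=> vx; have /and3P [/flip s0 _ _] := sP x vx.
  by rewrite /c s0 tside_a0 // in_set1; case: (s x); case: (tside w x); case: (_ == _).
have c_vertex x y : fvalid H x -> fvalid H y -> x.1.1 = y.1.1 -> c y = c x.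
  move=> vx vy exy; suff [] : fvalid H y /\ c y = c x by [].
  apply: (connect_preserve (P := fun z => fvalid H z /\ c z = c x)
    _ (connect_at_vertex w vx vy exy)) => // a b [va <-].
  by case/orP => /eqP ->; [rewrite gem_fvalid ?c_a1 | rewrite c_a2].
pose c_const u := forall v b, fvalid H (u, v, b) -> c (u, v, b) = c (p, q, false).
have c_const_q : c_const q.
  apply: connect_preserve cpq _ => [u u' c_u|v b vv]; last exact: c_vertex.
  rewrite /adjg in_setD1 => /andP [ne uH] v b vv.
  have vf : fvalid H (u, u', false) by [].
  rewrite (@c_vertex (u', u, false)) //; last by rewrite /fvalid setUC.
  have -> : (u', u, false) = a0 (u, u', false) by [].
  by rewrite -(c_u u' false vf) (c_a0 _ vf) /= (negbTE ne) addbF.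
have := c_const_q p false; rewrite /fvalid setUC pqH => /(_ isT).
have -> : (q, p, false) = a0 (p, q, false) by [].
by rewrite c_a0 // eqxx addbT; case: (c _).
Qed.

End Twists.

Section Embedding.
Variables (h n : nat) (E H : graph n).
Hypotheses (sE : simpleg E) (sH : simpleg H) (EH : E \subset H) (cH : (ncomp H <= 1)%N).
Hypothesis bE : (#|E| + ncomp E <= h + n)%N.
Hypothesis bH : (#|H| + 1 <= #|E| + ncomp E)%N.

Lemma inA1_gem k a1 : is_gem H a1 -> good_embedding k h H a1 -> inA1 k h E.
Proof.
move=> gem_a1 good_a1; rewrite /inA1 sE; apply/existsP; exists H.
by rewrite sH EH cH; apply/existsP; exists a1; rewrite gem_a1.
Qed.

Lemma egenus_le_h a1 : (egenus H a1 <= h%:Z)%R.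
Proof. by apply: le_trans (egenus_le sH a1) _; lia. Qed.

Lemma inA1_OE : inA1 OEk h E.
Proof.
apply: (inA1_gem (rotation_gem_is_gem H (twist set0))).
by rewrite /= orientable_untwisted // egenus_le_h.
Qed.

Lemma inA1_E : inA1 Ek h E.
Proof. by apply: (inA1_gem (rotation_gem_is_gem H (twist set0))); apply: egenus_le_h. Qed.

Lemma inA1_NE : inA1 NEk h E.
Proof.
have [small|] := boolP ((#|E| + ncomp E < h + n)%N || (h == 0)).
  apply: (inA1_gem (rotation_gem_is_gem H (twist set0))).
  rewrite /= egenus_le_h /=; apply/orP; right.
  case/orP: small => [lt|/eqP h0]; first by rewrite (le_lt_trans (egenus_le sH _)) //; lia.
  by have := egenus_le_h (rotation_gem H (twist set0)); rewrite h0 le_eqVlt orbC.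
rewrite negb_or -leqNgt => /andP [big h_neq0].
have [/existsP [p /existsP [q nbE]] | noNB] :=
  boolP [exists p, exists q, nonbridge E p q].
  have nbH : nonbridge H p q.
    move: nbE => /and3P [pq pqE cpq].
    by rewrite /nonbridge pq (subsetP EH _ pqE) (connect_adjgS _ cpq) // setSD.
  apply: (inA1_gem (rotation_gem_is_gem H (twist [set [set p; q]]))).
  by rewrite /= egenus_le_h nonorientable_twisted.
have /forest_bound : forall p q, ~~ nonbridge E p q.
  by move=> p q; apply: contra noNB => nb; apply/existsP; exists p; apply/existsP; exists q.
by move=> /(_ sE); move: big h_neq0; lia.
Qed.

End Embedding.

Lemma inF_inA k h n (E : graph n) : (0 < n)%N -> inF h E -> inA k h E.
Proof.
move=> n0 /andP [sE bE]; have [H [sH EH cH bH]] := connected_extension n0 sE.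
have OE := inA1_OE sE sH EH cH bE bH; have NE := inA1_NE sE sH EH cH bE bH.
by case: k => /=; rewrite ?OE ?NE ?(inA1_E sE sH EH cH bE bH).
Qed.

Section Isomorphism.
Variable n : nat.
Implicit Types (E : graph n) (P Q : pred (graph n)).

Definition relabel (s : {perm 'I_n}) E : graph n :=
  [set [set s x | x in e] | e : {set 'I_n} in E].

Lemma relabelK s : cancel (relabel s) (relabel s^-1).
Proof.
move=> E; rewrite /relabel -imset_comp -[RHS]imset_id; apply: eq_imset => e /=.
by rewrite -imset_comp -[RHS]imset_id; apply: eq_imset => x /=; rewrite permK.
Qed.

Lemma isogP E E' : reflect (exists s, E' = relabel s E) (isog E E').
Proof. by apply: (iffP existsP) => [[s /eqP ->]|[s ->]]; exists s. Qed.

Lemma isog_refl E : isog E E.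
Proof.
apply/isogP; exists 1%g; rewrite /relabel -[LHS]imset_id; apply: eq_imset => e.
by rewrite -[LHS]imset_id; apply: eq_imset => x; rewrite perm1.
Qed.

(* Every graph is a relabelling of the representative picked in its class. *)
Lemma lcount_le_ucount P : (lcount P <= ucount P * n`!)%N.
Proof.
rewrite /lcount /ucount -card_Sn -cardsT.
set S := [set E | P E]; set C := [set [set E' | P E' && isog E E'] | E in S].
pose f (Cs : {set graph n} * {perm 'I_n}) := relabel Cs.2 (odflt set0 [pick E in Cs.1]).
rewrite -cardsX; apply: leq_trans (leq_imset_card f _).
apply/subset_leq_card/subsetP => E ES.
set Cl := [set E' | P E' && isog E E'].
have ECl : E \in Cl by rewrite inE isog_refl andbT; rewrite inE in ES.
have [E1 pickE1 E1Cl] : exists2 E1, [pick E in Cl] = Some E1 & E1 \in Cl.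
  by case: pickP => [E1 ?|/(_ E)]; [exists E1 | rewrite ECl].
move: E1Cl; rewrite inE => /andP [_ /isogP [s E1E]].
apply/imsetP; exists (Cl, s^-1%g); first by rewrite !inE andbT; apply: imset_f.
by rewrite /f /= pickE1 /= E1E relabelK.
Qed.

Lemma ucount_mono P Q : (forall E, P E -> Q E) -> (ucount P <= ucount Q)%N.
Proof.
move=> PQ; rewrite /ucount; set SP := [set E | P E].
pose restrict (S : {set graph n}) := S :&: SP.
have -> : [set [set E' | P E' && isog E E'] | E in SP] =
          restrict @: [set [set E' | Q E' && isog E E'] | E in SP].
  rewrite -imset_comp; apply: eq_imset => E /=; apply/setP => E'.
  by rewrite !inE; case PE': (P E'); rewrite ?andbF ?andbT ?PQ.
apply: leq_trans (leq_imset_card _ _) _.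
by apply/subset_leq_card/imsetS/subsetP => E; rewrite !inE; apply: PQ.
Qed.

End Isomorphism.

Lemma eq_set2_gt n (a b c d : 'I_n) : (b < a)%N -> (d < c)%N ->
  [set a; b] = [set c; d] -> a = c /\ b = d.
Proof.
move=> ba dc eabcd.
have /[!inE] ac : a \in [set c; d] by rewrite -eabcd !inE eqxx.
have /[!inE] ca : c \in [set a; b] by rewrite eabcd !inE eqxx.
have /[!inE] bcd : b \in [set c; d] by rewrite -eabcd !inE eqxx orbT.
suff [] : val a = val c /\ val b = val d by move=> /val_inj -> /val_inj ->.
move: ac ca bcd ba dc; rewrite -!val_eqE /=; lia.
Qed.

(* Every vertex i > 0 picks a parent p i <= i/2, which gives a spanning tree;
   h further edges are chosen among pairs of vertices >= n/2, which no tree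
   edge joins since a tree edge has an endpoint < n/2. *)
Section TreePlusPairs.
Variables (n h : nat).
Hypothesis n_gt0 : (0 < n)%N.

Definition root : 'I_n := Ordinal n_gt0.
Definition upper_half := [set j : 'I_n | (n <= 2 * j)%N].
Definition upper_pairs := [set e : {set 'I_n} | (e \subset upper_half) && (#|e| == 2)].
Definition upper_pair := {e : {set 'I_n} | e \in upper_pairs}.
Definition parents (i : 'I_n) := [set j : 'I_n | (2 * j <= i)%N].
Definition tree_of (p : {ffun 'I_n -> 'I_n}) : graph n :=
  [set [set i; p i] | i in [set i : 'I_n | p i != i]].
Definition graph_of (pY : {ffun 'I_n -> 'I_n} * {set upper_pair}) : graph n :=
  tree_of pY.1 :|: [set val y | y in pY.2].
Definition codes := setX [set p : {ffun 'I_n -> 'I_n} | p \in family parents]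
                         [set Y : {set upper_pair} | #|Y| == h].

Section Parents.
Variable p : {ffun 'I_n -> 'I_n}.
Hypothesis p_par : p \in family parents.

Lemma parent_le i : (2 * p i <= i)%N.
Proof. by have /familyP/(_ i) := p_par; rewrite inE. Qed.

Lemma parent_lt i : p i != i -> (p i < i)%N.
Proof. by have := parent_le i; rewrite -val_eqE /=; lia. Qed.

Lemma parent_eq i : (p i == i) = (val i == 0).
Proof. by have := parent_le i; rewrite -val_eqE /=; lia. Qed.

Lemma tree_edge_notin_pairs e : e \in tree_of p -> e \notin upper_pairs.
Proof.
case/imsetP => i _ ->; rewrite inE negb_and; apply/orP; left.
apply/subsetPn; exists (p i); first by rewrite !inE eqxx orbT.
by rewrite inE -ltnNge; have := parent_le i; have := ltn_ord i; lia.
Qed.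

Lemma connect_tree_root i : connect (adjg (tree_of p)) root i.
Proof.
elim/ltn_ind: (val i) {-2}i (erefl (val i)) => k IHk j jk.
have [pj|pj] := boolP (p j == j).
  by rewrite (_ : j = root) ?connect0 //; apply: val_inj; move: pj; rewrite parent_eq => /eqP.
apply: connect_trans (IHk _ _ (p j) erefl) (connect1 _); first by rewrite -jk parent_lt.
by rewrite /adjg setUC; apply: imset_f; rewrite inE.
Qed.

End Parents.

Lemma graph_of_pairs pY :
  pY \in codes -> graph_of pY :&: upper_pairs = [set val y | y in pY.2].
Proof.
case: pY => p Y; rewrite !inE /= => /andP [p_par _].
rewrite /graph_of setIUl (_ : tree_of p :&: _ = set0) ?set0U.
  by apply/setIidPl/subsetP => _ /imsetP [y _ ->]; apply: valP.
apply/setP => e; rewrite in_setI in_set0.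
by apply/andP => -[/(tree_edge_notin_pairs p_par)/negP].
Qed.

Lemma graph_of_tree pY : pY \in codes -> graph_of pY :\: upper_pairs = tree_of pY.1.
Proof.
case: pY => p Y; rewrite !inE /= => /andP [p_par _].
rewrite /graph_of setDUl (_ : [set val y | y in Y] :\: _ = set0) ?setU0.
  apply/setDidPl; rewrite disjoints_subset.
  by apply/subsetP => e eT; rewrite in_setC (tree_edge_notin_pairs p_par eT).
apply/setP => e; rewrite in_setD in_set0; apply/andP => -[+ /imsetP [y _ ey]].
by rewrite ey (valP y).
Qed.

Lemma graph_of_inj : {in codes &, injective graph_of}.
Proof.
move=> [p Y] [p' Y'] cpY cpY' epY.
have eY : Y = Y'.
  by apply: (imset_inj val_inj); rewrite -(graph_of_pairs cpY) -(graph_of_pairs cpY') epY.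
have eT : tree_of p = tree_of p' by rewrite -(graph_of_tree cpY) -(graph_of_tree cpY') epY.
move: cpY cpY'; rewrite !inE /= => /andP [p_par _] /andP [p'_par _].
congr (_, _) => //; apply/ffunP => i.
have [pi|pi] := boolP (p i == i).
  by move: (pi); rewrite (parent_eq p_par) -(parent_eq p'_par) => /eqP ->; apply/eqP.
have : [set i; p i] \in tree_of p' by rewrite -eT; apply: imset_f; rewrite inE.
case/imsetP => j /[!inE] p'j /(eq_set2_gt (parent_lt p_par pi) (parent_lt p'_par p'j)).
by case=> <- ->.
Qed.

Lemma graph_of_inF pY : pY \in codes -> inF h (graph_of pY).
Proof.
case: pY => p Y; rewrite !inE /= => /andP [p_par /eqP cardY].
apply/andP; split.
  apply/forall_inP => e /setUP [/imsetP [i /[!inE] pi ->]|/imsetP [y _ ->]].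
    by rewrite cards2 (eq_sym i) pi.
  by have := valP y; rewrite inE => /andP [_ ->].
have card_tree : (#|tree_of p| <= n.-1)%N.
  apply: leq_trans (leq_imset_card _ _) _.
  have -> : n.-1 = #|[set~ root]| by rewrite cardsC1 card_ord.
  apply/subset_leq_card/subsetP => i.
  by rewrite !inE; apply: contra => /eqP ->; rewrite parent_eq.
have card_graph : (#|graph_of (p, Y)| <= n.-1 + h)%N.
  apply: leq_trans (leq_card_setU _ _) (leq_add card_tree _).
  by rewrite -cardY leq_imset_card.
have connected : (ncomp (graph_of (p, Y)) <= 1)%N.
  apply: (ncomp_le1 (x0 := root)) => x; apply: connect_adjgS (connect_tree_root p_par x).
  exact: subsetUl.
by move: card_graph connected; rewrite -subn1; move: #|_| (ncomp _) => a b; lia.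
Qed.

Lemma card_codes : #|codes| = (\prod_(i < n) #|parents i| * 'C(#|upper_pairs|, h))%N.
Proof.
rewrite cardsX; congr (_ * _); last by rewrite card_draws card_sig.
rewrite (eq_card (B := family parents)) => [|p]; last by rewrite inE.
by rewrite card_family foldrE big_map big_enum.
Qed.

Lemma card_parents (i : 'I_n) : ((i./2).+1 <= #|parents i|)%N.
Proof.
have le_n : ((i./2).+1 <= n)%N.
  by apply: leq_ltn_trans (ltn_ord i); rewrite -{2}(odd_double_half i) -addnn; lia.
have widen_inj : injective (widen_ord le_n) by move=> a b /(congr1 val) /= /val_inj.
rewrite -[X in (X <= _)%N](card_ord (i./2).+1) -(card_imset _ widen_inj).
apply/subset_leq_card/subsetP => _ /imsetP [k _ ->]; rewrite inE /=.
by have := ltn_ord k; rewrite -{2}(odd_double_half i) -addnn; lia.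
Qed.

Lemma card_upper_half : (n./2 <= #|upper_half|)%N.
Proof.
have n_split := odd_double_half n; rewrite -addnn in n_split.
have lt_n (k : 'I_(n./2)) : (odd n + n./2 + k < n)%N by have := ltn_ord k; lia.
pose f (k : 'I_(n./2)) : 'I_n := Ordinal (lt_n k).
have f_inj : injective f by move=> a b /(congr1 val) /addnI /val_inj.
rewrite -[X in (X <= _)%N](card_ord (n./2)) -(card_imset _ f_inj).
by apply/subset_leq_card/subsetP => _ /imsetP [k _ ->]; rewrite inE /=; lia.
Qed.

Lemma card_upper_pairs : ('C(n./2, 2) <= #|upper_pairs|)%N.
Proof.
pose U := {x : 'I_n | x \in upper_half}.
pose g (e : {set U}) : {set 'I_n} := [set val x | x in e].
have g_inj : injective g by apply: imset_inj; apply: val_inj.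
apply: (@leq_trans 'C(#|{: U}|, 2)).
  apply/leq_bin2l/(leq_trans card_upper_half); rewrite card_sig.
  by apply/subset_leq_card/subsetP => x; rewrite inE.
rewrite -card_draws -(card_imset _ g_inj); apply/subset_leq_card/subsetP => e /imsetP [d].
rewrite inE => d2 ->; rewrite inE; apply/andP; split.
  by apply/subsetP => _ /imsetP [x _ ->]; apply: valP.
by rewrite card_imset //; apply: val_inj.
Qed.

Lemma lcount_inF_ge :
  (\prod_(i < n) (i./2).+1 * 'C('C(n./2, 2), h) <= lcount (inF h (n := n)))%N.
Proof.
apply: (@leq_trans #|codes|).
  rewrite card_codes; apply: leq_mul; first by apply: leq_prod => i _; apply: card_parents.
  exact: leq_bin2l card_upper_pairs.
rewrite -(card_in_imset graph_of_inj).
by apply/subset_leq_card/subsetP => _ /imsetP [pY cpY ->]; rewrite inE graph_of_inF.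
Qed.

End TreePlusPairs.

Lemma leq_exp2rW m n e : (m <= n)%N -> (m ^ e <= n ^ e)%N.
Proof. by move=> le_mn; elim: e => // e IHe; rewrite !expnS leq_mul. Qed.

Lemma leq_fact m n : (m <= n)%N -> (m`! <= n`!)%N.
Proof.
elim: n => [|n IHn]; first by rewrite leqn0 => /eqP ->.
rewrite leq_eqVlt ltnS => /predU1P [-> //|/IHn le_mn].
by rewrite factS (leq_trans le_mn) // leq_pmull.
Qed.

Lemma fact_leq_exp h : (h`! <= h ^ h)%N.
Proof.
elim: h => // h IHh; rewrite factS expnS leq_mul2l (leq_trans IHh) ?orbT //.
exact: leq_exp2rW.
Qed.

Lemma leq_self_expn m n : (m <= n)%N -> (m ^ m <= n ^ n)%N.
Proof.
case: m => [|m] le_mn; first by rewrite expn_gt0; case: n le_mn.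
exact: leq_trans (leq_exp2rW _ le_mn) (leq_pexp2l (leq_trans _ le_mn) le_mn).
Qed.

Lemma expn_subn_leq_ffact M h : ((M - h) ^ h <= M ^_ h)%N.
Proof.
elim: h => [|h IHh]; first by rewrite ffactn0.
rewrite ffactnSr expnSr leq_mul ?leq_sub2l //.
by apply: leq_trans IHh; apply/leq_exp2rW/leq_sub2l.
Qed.

Lemma self_expn_leq_bin L C h :
  (h * h <= L * (C - h))%N -> (h ^ h <= L ^ h * 'C(C, h))%N.
Proof.
move=> hL; have [->|h_gt0] := posnP h; first by rewrite bin0 muln1.
rewrite -(@leq_pmul2r (h ^ h)) ?expn_gt0 ?h_gt0 // -expnMn -mulnA.
apply: leq_trans (leq_exp2rW h hL) _; rewrite expnMn leq_mul2l.
rewrite (leq_trans (expn_subn_leq_ffact C h)) ?orbT //.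
by rewrite -bin_ffact leq_mul2l fact_leq_exp orbT.
Qed.

Lemma fact_leq_prod_half n : (n`! <= 2 ^ n * \prod_(i < n) (i./2).+1)%N.
Proof.
elim: n => [|n IHn]; first by rewrite big_ord0.
rewrite big_ord_recr /= factS expnSr mulnC.
have le_n1 : (n.+1 <= 2 * (n./2).+1)%N by rewrite -{1}(odd_double_half n) -addnn; lia.
apply: leq_trans (leq_mul IHn le_n1) _.
by rewrite !mulnA leq_mul2r (mulnAC _ _ 2) leqnn orbT.
Qed.

(* With m = n/2 and C = 'C(m, 2) ~ m^2/2, the bound h <= D n <= 3 D m gives
   h^2 = O(C - h) once n is large. *)
Lemma sqr_leq_bin2_sub D n h :
  (0 < D)%N -> (32 * D + 6 <= n)%N -> (h <= D * n)%N ->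
  (h * h <= 64 * D * D * ('C(n./2, 2) - h))%N.
Proof.
move=> D_gt0 n_large hD; set m := n./2.
have eC : (2 * 'C(m, 2) = m * (m - 1))%N.
  by have := bin_ffact m 2; rewrite ffactnSr ffactn1 mulnC => <-.
have nm : (n <= 2 * m + 1)%N by rewrite -{1}(odd_double_half n) -addnn; lia.
have m_large : (16 * D + 2 <= m)%N by lia.
have h_le_Dm : (h <= 3 * D * m)%N by nia.
have h_le_m2 : (4 * h <= m * m - 2 * m)%N by nia.
have m2_le_C : (m * m <= 4 * ('C(m, 2) - h))%N by nia.
have h2_le_m2 : (h * h <= 9 * D * D * (m * m))%N by nia.
nia.
Qed.

Lemma lcount_inF_gt0 n h : (0 < lcount (inF h (n := n)))%N.
Proof.
rewrite card_gt0; apply/set0Pn; exists set0; rewrite !inE /inF.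
apply/andP; split; first by apply/forall_inP => e; rewrite inE.
by rewrite cards0 add0n (leq_trans (ncomp_le_n _)) ?leq_addl.
Qed.

Lemma lcount_inF_large D n h :
  (0 < D)%N -> (32 * D + 6 <= n)%N -> (h <= D * n)%N ->
  (h ^ h * n`! <= (2 * (64 * D * D) ^ D) ^ n * lcount (inF h (n := n)))%N.
Proof.
move=> D_gt0 n_large hD.
have n_gt0 : (0 < n)%N by lia.
have hL := self_expn_leq_bin (sqr_leq_bin2_sub D_gt0 n_large hD).
apply: leq_trans (leq_mul hL (fact_leq_prod_half n)) _.
rewrite mulnCA !mulnA -mulnA; apply: leq_mul; last first.
  by rewrite mulnC (leq_trans _ (lcount_inF_ge h n_gt0)).
rewrite [in X in (_ <= X)%N]expnMn -expnM leq_mul2l (leq_pexp2l _ hD) ?orbT //.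
by rewrite !muln_gt0 D_gt0.
Qed.

Lemma lcount_inF_small D N n h : (0 < n)%N -> (n <= N)%N -> (h <= D * N)%N ->
  (h ^ h * n`! <= ((D * N) ^ (D * N) * N`!) ^ n * lcount (inF h (n := n)))%N.
Proof.
move=> n_gt0 nN hDN; set B := _ * N`!.
have hh_gt0 : (0 < h ^ h)%N by rewrite expn_gt0; case: (h).
have hB : (h ^ h * n`! <= B)%N by rewrite leq_mul ?leq_self_expn ?leq_fact.
apply: leq_trans _ (leq_pmulr _ (lcount_inF_gt0 n h)).
apply: leq_trans hB (leq_trans _ (leq_pexp2l (leq_trans _ hB) n_gt0)) => //.
by rewrite muln_gt0 hh_gt0 fact_gt0.
Qed.

Lemma lcount_inF_lower D : (0 < D)%N -> exists2 K, (0 < K)%N & forall n h,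
  (0 < n)%N -> (h <= D * n)%N -> (h ^ h * n`! <= K ^ n * lcount (inF h (n := n)))%N.
Proof.
move=> D_gt0; set N := 32 * D + 6; set B := (D * N) ^ (D * N) * N`!.
set A := 2 * (64 * D * D) ^ D.
have A_gt0 : (0 < A)%N by rewrite muln_gt0 expn_gt0 !muln_gt0 D_gt0.
have B_gt0 : (0 < B)%N by rewrite muln_gt0 fact_gt0 expn_gt0 muln_gt0 D_gt0 addn_gt0 orbT.
exists (B * A) => [|n h n_gt0 hD]; first by rewrite muln_gt0 A_gt0 B_gt0.
rewrite expnMn -mulnA.
have [n_small|n_large] := ltnP n N.
  have hDN : (h <= D * N)%N by apply: leq_trans hD _; rewrite leq_mul2l ltnW ?orbT.
  apply: leq_trans (lcount_inF_small n_gt0 (ltnW n_small) hDN) _.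
  by rewrite leq_mul2l leq_pmull ?orbT // expn_gt0 A_gt0.
apply: leq_trans (lcount_inF_large D_gt0 n_large hD) _.
by rewrite leq_pmull // expn_gt0 B_gt0.
Qed.

Lemma ucount_inF_lower K n h :
  (h ^ h * n`! <= K ^ n * lcount (inF h (n := n)))%N ->
  (h ^ h <= K ^ n * ucount (inF h (n := n)))%N.
Proof.
move=> hK; rewrite -(leq_pmul2r (fact_gt0 n)) (leq_trans hK) //.
by rewrite -mulnA leq_mul2l lcount_le_ucount orbT.
Qed.

Local Open Scope ring_scope.

Lemma natr_le_invXn (R : numFieldType) (K n a b : nat) : (0 < K)%N ->
  (a <= K ^ n * b)%N -> (K%:R : R)^-1 ^+ n * a%:R <= b%:R.
Proof.
move=> K_gt0 hab; rewrite exprVn -natrX ler_pdivrMl ?ltr0n ?expn_gt0 ?K_gt0 //.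
by rewrite -natrM ler_nat.
Qed.

Theorem corollary1 (R : realType) (c0 : R) : 0 < c0 ->
  exists2 c : R, 0 < c &
    forall (k : kind) (n h : nat), (1 <= n)%N -> (h%:R <= c0 * n%:R) ->
      [/\ (lcount (inF h (n := n)) <= lcount (inA k h (n := n)))%N,
          c ^+ n * (h ^ h)%:R * (n`!)%:R <= (lcount (inF h (n := n)))%:R,
          (ucount (inF h (n := n)) <= ucount (inA k h (n := n)))%N &
          c ^+ n * (h ^ h)%:R <= (ucount (inF h (n := n)))%:R].
Proof.
move=> c0_gt0; set D := (Num.bound c0).+1.
have c0_le_D : c0 <= D%:R.
  by rewrite ltW // (lt_le_trans (archi_boundP (ltW c0_gt0))) // ler_nat.
have [K K_gt0 lowerK] := lcount_inF_lower (ltn0Sn (Num.bound c0)).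
exists (K%:R)^-1; first by rewrite invr_gt0 ltr0n.
move=> k n h n_gt0 hc0.
have hD : (h <= D * n)%N.
  by rewrite -(ler_nat R) natrM (le_trans hc0) // ler_wpM2r.
have lowerKn := lowerK n h n_gt0 hD.
split.
- by apply/subset_leq_card/subsetP => E; rewrite !inE; apply: inF_inA.
- by rewrite -mulrA -natrM; apply: natr_le_invXn.
- by apply: ucount_mono => E; apply: inF_inA.
- exact/natr_le_invXn/ucount_inF_lower.
Qed.
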